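(* Let $j,k$ be two settings with short-regression parameters $\theta^j_s,\theta^k_s$ and bias bounds $\nu^j_l=-\nu^{j*}$, $\nu^j_u=\nu^{j*}$, $\nu^k_l=-\nu^{k*}$, $\nu^k_u=\nu^{k*}$ with $\nu^{j*},\nu^{k*}>0$, and suppose the proportionality bounds are symmetric: $\rho^{jk}\in[1/\rho^{jk}_u,\rho^{jk}_u]$ with $\rho^{jk}_u\ge1$. Let $\mathbb{C}^{jk}=\{\frac{1-\rho^{jk}_u}{\rho^{jk}_u}\nu^k_l,(\rho^{jk}_u-1)\nu^k_l,\frac{1-\rho^{jk}_u}{\rho^{jk}_u}\nu^k_u,(\rho^{jk}_u-1)\nu^k_u\}$, $c^{jk}_l=\min\mathbb{C}^{jk}$, $c^{jk}_u=\max\mathbb{C}^{jk}$. Then $c^{jk}_u=(\rho^{jk}_u-1)\nu^{k*}$ and $c^{jk}_l=-(\rho^{jk}_u-1)\nu^{k*}$, and the marginal sharpening conditions — namely (1) $\nu^k_u+c^{jk}_u<\nu^j_u$ or (2) $\nu^k_l+c^{jk}_l>\nu^j_l$ — reduce to $\nu^{j*}>\rho^{jk}_u\nu^{k*}$. In particular, when $\nu^{j*}=\nu^{k*}$, strict marginal sharpening never occurs for any $\rho^{jk}_u>1$, i.e. $\mathrm{proj}_j(\mathcal{J}^{jk})=\mathcal{I}^j$.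
   Context: Here $\mathcal{I}^i=[\theta^i_s-\nu^i_u,\theta^i_s-\nu^i_l]$ for $i\in\{j,k\}$, $\mathcal{I}^{jk}_D=[(\theta^j_s-\theta^k_s)-c^{jk}_u,(\theta^j_s-\theta^k_s)-c^{jk}_l]$, $\mathcal{J}^{jk}=\{(\theta^j,\theta^k):\theta^j\in\mathcal{I}^j,\theta^k\in\mathcal{I}^k,\theta^j-\theta^k\in\mathcal{I}^{jk}_D\}$, and $\mathrm{proj}_j(\mathcal{J}^{jk})=\{\theta^j:\exists\theta^k,(\theta^j,\theta^k)\in\mathcal{J}^{jk}\}$. Strict marginal sharpening means $\mathrm{proj}_j(\mathcal{J}^{jk})\subsetneq\mathcal{I}^j$, which holds if and only if condition (1) or (2) holds. In the paper's framework, $\theta^i$ is a setting-specific causal effect, $\theta^i_s$ the corresponding omitted-variable short-regression parameter, the bias $B^i=\theta^i_s-\theta^i$ lies in $[\nu^i_l,\nu^i_u]$, and $B^j=\rho^{jk}B^k$. *)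

From HB Require Import structures.
From mathcomp Require Import all_boot all_order all_algebra.
From mathcomp Require Import classical_sets.
Set Implicit Arguments. Unset Strict Implicit. Unset Printing Implicit Defensive.
Import Order.TTheory GRing.Theory Num.Theory.
Local Open Scope ring_scope.
Local Open Scope classical_set_scope.

Section Defs.
Variable R : realFieldType.

(* The four candidate values C^{jk}, for proportionality upper bound rho_u
   (lower bound 1/rho_u) and bias bounds nu_l, nu_u of setting k. *)
Definition Cjk (rho_u nu_l nu_u : R) : seq R :=
  [:: (1 - rho_u) / rho_u * nu_l; (rho_u - 1) * nu_l;
      (1 - rho_u) / rho_u * nu_u; (rho_u - 1) * nu_u].

Definition c_l (rho_u nu_l nu_u : R) : R :=
  Num.min (Num.min ((1 - rho_u) / rho_u * nu_l) ((rho_u - 1) * nu_l))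
          (Num.min ((1 - rho_u) / rho_u * nu_u) ((rho_u - 1) * nu_u)).
Definition c_u (rho_u nu_l nu_u : R) : R :=
  Num.max (Num.max ((1 - rho_u) / rho_u * nu_l) ((rho_u - 1) * nu_l))
          (Num.max ((1 - rho_u) / rho_u * nu_u) ((rho_u - 1) * nu_u)).

Definition Iint (ths nu_l nu_u : R) : set R :=
  [set t | ths - nu_u <= t <= ths - nu_l].

Definition IDint (thjs thks cl cu : R) : set R :=
  [set t | (thjs - thks) - cu <= t <= (thjs - thks) - cl].

Definition Jset (thjs thks nujl nuju nukl nuku cl cu : R) : set (R * R) :=
  [set p | Iint thjs nujl nuju p.1 /\ Iint thks nukl nuku p.2 /\
           IDint thjs thks cl cu (p.1 - p.2)].

Definition projj (J : set (R * R)) : set R :=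
  [set t | exists s, J (t, s)].

End Defs.

From HB Require Import structures.
From mathcomp Require Import all_boot all_order all_algebra.
From mathcomp Require Import classical_sets.
From mathcomp Require Import ring lra.
Import Order.TTheory GRing.Theory Num.Theory.
Local Open Scope ring_scope.
Local Open Scope classical_set_scope.

(* With symmetric bias bounds [-nu, nu] and rho in [1/rho_u, rho_u], the four
   candidates of C^{jk} are +-(rho_u - 1) nu and +-(rho_u - 1) nu / rho_u, so
   c_u = (rho_u - 1) nu = - c_l.  Conversely, if nu^j <= nu^k and c_l <= 0 <= c_u, every
   theta^j in I^j is matched by the theta^k carrying the same bias, for which
   theta^j - theta^k = theta^j_s - theta^k_s lies in I_D^{jk}; so the
   projection of J^{jk} is all of I^j. *)

Section SharpeningBounds.
Context {R : realFieldType}.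
Implicit Types (a e rho nu : R).

Lemma max_sym4 a e : 0 <= a <= e ->
  Num.max (Num.max a (- e)) (Num.max (- a) e) = e.
Proof.
move=> /andP[a_ge0 a_le_e].
rewrite (@max_l _ _ a) ?(@max_r _ _ (- a)) ?max_r //; lra.
Qed.

Lemma min_sym4 a e : 0 <= a <= e ->
  Num.min (Num.min a (- e)) (Num.min (- a) e) = - e.
Proof.
move=> /andP[a_ge0 a_le_e].
rewrite (@min_r _ _ a) ?(@min_l _ _ (- a)) ?min_l //; lra.
Qed.

Lemma divr_ge1_bounds e rho : 0 <= e -> 1 <= rho -> 0 <= e / rho <= e.
Proof.
move=> e_ge0 rho_ge1; have rho_gt0 : 0 < rho by lra.
by rewrite divr_ge0 ?ler_pdivrMr ?ler_peMr // ltW.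
Qed.

Lemma Cjk_sym_entries rho nu :
  (1 - rho) / rho * - nu = (rho - 1) * nu / rho /\
  (1 - rho) / rho * nu = - ((rho - 1) * nu / rho) /\
  (rho - 1) * - nu = - ((rho - 1) * nu).
Proof. by split; [|split]; ring. Qed.

Lemma c_u_sym rho nu : 1 <= rho -> 0 <= nu -> c_u rho (- nu) nu = (rho - 1) * nu.
Proof.
move=> rho_ge1 nu_ge0; rewrite /c_u.
have [-> [-> ->]] := Cjk_sym_entries rho nu.
by apply: max_sym4; apply: divr_ge1_bounds => //; apply: mulr_ge0; lra.
Qed.

Lemma c_l_sym rho nu : 1 <= rho -> 0 <= nu -> c_l rho (- nu) nu = - ((rho - 1) * nu).
Proof.
move=> rho_ge1 nu_ge0; rewrite /c_l.
have [-> [-> ->]] := Cjk_sym_entries rho nu.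
by apply: min_sym4; apply: divr_ge1_bounds => //; apply: mulr_ge0; lra.
Qed.

Lemma projj_Jset_sub (thjs thks nujl nuju nukl nuku cl cu : R) :
  projj (Jset thjs thks nujl nuju nukl nuku cl cu) `<=` Iint thjs nujl nuju.
Proof. by move=> t [s []]. Qed.

Lemma projj_Jset_full (thjs thks nujl nuju nukl nuku cl cu : R) :
  nukl <= nujl -> nuju <= nuku -> cl <= 0 <= cu ->
  projj (Jset thjs thks nujl nuju nukl nuku cl cu) = Iint thjs nujl nuju.
Proof.
move=> le_l le_u /andP[cl_le0 cu_ge0].
apply/seteqP; split; first exact: projj_Jset_sub.
move=> t It; exists (thks + (t - thjs)).
move: It; rewrite /Jset /Iint /IDint /= => /andP[lo hi].
by split; [rewrite lo hi | split; apply/andP; split; lra].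
Qed.

End SharpeningBounds.

Theorem corollary1 (R : realFieldType) (thjs thks nuj nuk rhou : R) :
  0 < nuj -> 0 < nuk -> 1 <= rhou ->
  c_u rhou (- nuk) nuk = (rhou - 1) * nuk /\
  c_l rhou (- nuk) nuk = - ((rhou - 1) * nuk) /\
  ((nuk + c_u rhou (- nuk) nuk < nuj \/
    - nuk + c_l rhou (- nuk) nuk > - nuj) <-> nuj > rhou * nuk) /\
  (nuj = nuk -> 1 < rhou ->
   projj (Jset thjs thks (- nuj) nuj (- nuk) nuk
            (c_l rhou (- nuk) nuk) (c_u rhou (- nuk) nuk))
   = Iint thjs (- nuj) nuj).
Proof.
move=> nuj_gt0 nuk_gt0 rhou_ge1.
have nuk_ge0 : 0 <= nuk by exact: ltW.
have cu_eq := c_u_sym rhou nuk rhou_ge1 nuk_ge0.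
have cl_eq := c_l_sym rhou nuk rhou_ge1 nuk_ge0.
have cu_ge0 : 0 <= (rhou - 1) * nuk by apply: mulr_ge0; lra.
split=> //; split=> //; split.
  by rewrite cu_eq cl_eq; split; [case|]; lra.
move=> eq_nu _; subst nuj.
by apply: projj_Jset_full; rewrite ?lexx // cl_eq cu_eq oppr_le0 cu_ge0.
Qed.
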